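(* Let $(B_i)_{i\in Q_0}\in\bigoplus_i\mathrm{Herm}(V_i)$ and let $a_{i,1}\leq\ldots\leq a_{i,d_i}$ be the eigenvalues of $B_i$. Set $\Theta_{i,k}=a_{i,k}-a_{i,k+1}$ for $i\in Q_0$, $1\le k<d_i$, and $\Theta_{i,d_i}=a_{i,d_i}$. Then $(B_i)_i$ belongs to the image of $\mu_Q$ if and only if the tuple of scalar operators $(\Theta_{i,k}\cdot\mathrm{id}_{V_{i,k}})_{i,k}$ belongs to the image of $\mu_{Q_{\mathbf d}}:R_{\hat{\mathbf d}}(Q_{\mathbf d})\to\bigoplus_{i,k}\mathrm{Herm}(V_{i,k})$.
   Context: $Q$ is a finite quiver with vertex set $Q_0$ and arrows $\alpha:i\to j$; $\mathbf d\in\mathbb NQ_0$. For any quiver $\Gamma$ and complex vector spaces $W_v$ ($v\in\Gamma_0$) with Hermitian inner products, $R(\Gamma)=\bigoplus_{\alpha:v\to w}\mathrm{Hom}(W_v,W_w)$ and $\mu_\Gamma((f_\alpha))_v=\sum_{\alpha:w\to v}f_\alpha f_\alpha^*-\sum_{\alpha:v\to w}f_\alpha^*f_\alpha\in\mathrm{Herm}(W_v)$. For $Q$ we use spaces $V_i$ of dimension $d_i$, giving $\mu_Q$ on $R_{\mathbf d}(Q)$. The leg-extended quiver $Q_{\mathbf d}$ has vertices $(i,k)$ for $i\in Q_0$, $1\leq k\leq d_i$, an arrow $\alpha:(i,d_i)\to(j,d_j)$ for each arrow $\alpha:i\to j$ of $Q$ (with $d_i,d_j\geq1$), and arrows $\beta_{i,k}:(i,k)\to(i,k+1)$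 for $i\in Q_0$, $1\le k<d_i$. Its dimension vector $\hat{\mathbf d}$ is $\hat d_{i,k}=k$. For $Q_{\mathbf d}$ we use Hermitian spaces $V_{i,k}$ of dimension $k$, with $V_{i,d_i}=V_i$ (same Hermitian form), giving $\mu_{Q_{\mathbf d}}$ on $R_{\hat{\mathbf d}}(Q_{\mathbf d})$. *)

From HB Require Import structures.
From mathcomp Require Import all_boot all_order all_algebra.
Set Implicit Arguments. Unset Strict Implicit. Unset Printing Implicit Defensive.
Import Order.TTheory GRing.Theory Num.Theory.
Local Open Scope ring_scope.

(* Hermitian spaces W_v are identified with C^(dim) with the standard
   Hermitian form (choice of orthonormal bases); a linear map W_v -> W_w is a
   matrix 'M_(dim w, dim v) acting on column vectors; its adjoint is the
   conjugate transpose. *)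
Definition adjmx (C : numClosedFieldType) m n (M : 'M[C]_(m, n)) : 'M[C]_(n, m) :=
  map_mx Num.conj (M^T).

(* Moment map of a quiver Gamma = (vertices I, arrows E, source s, target t)
   with dimension vector dim, evaluated at vertex v:
     mu(f)_v = sum_{e : w -> v} f_e f_e^* - sum_{e : v -> w} f_e^* f_e.
   conform_mx only performs the (trivial) type cast 'M_(dim (t e)) -> 'M_(dim v)
   when t e = v (resp. s e = v). *)
Definition mu (C : numClosedFieldType) (I E : finType) (s t : E -> I)
  (dim : I -> nat) (f : forall e : E, 'M[C]_(dim (t e), dim (s e))) (v : I)
  : 'M[C]_(dim v) :=
  \sum_(e | t e == v) conform_mx (0 : 'M[C]_(dim v)) (f e *m adjmx (f e))
  - \sum_(e | s e == v) conform_mx (0 : 'M[C]_(dim v)) (adjmx (f e) *m f e).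

Lemma lastord_proof n : (0 < n)%N -> (n.-1 < n)%N.
Proof. by rewrite ltn_predL. Qed.
Definition lastord n (H : (0 < n)%N) : 'I_n := Ordinal (lastord_proof H).

Section LegQuiver.
Variables (V A : finType) (s t : A -> V) (d : V -> nat).

(* vertex (i,k), 1 <= k <= d_i, is encoded as (i, k-1) with k-1 : 'I_(d i) *)
Definition QdV : finType := {i : V & 'I_(d i)}.
Definition hatd (x : QdV) : nat := (tagged x).+1.

(* arrows: original arrows with d_i, d_j >= 1, and beta_{i,k} (1 <= k < d_i),
   encoded as (i, k-1) with k-1 : 'I_((d i).-1) *)
Definition QdA : finType :=
  ({a : A | (0 < d (s a))%N && (0 < d (t a))%N} + {i : V & 'I_((d i).-1)})%type.

Lemma beta_src_proof n (k : 'I_n.-1) : (k < n)%N.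
Proof. case: k => k /=; rewrite ltn_predRL => /ltnW //. Qed.
Lemma beta_tgt_proof n (k : 'I_n.-1) : (k.+1 < n)%N.
Proof. case: k => k /=; rewrite ltn_predRL //. Qed.

Definition Qdsrc (e : QdA) : QdV :=
  match e with
  | inl a => existT _ (s (val a)) (lastord (proj1 (elimT andP (valP a))))
  | inr b => existT _ (tag b) (Ordinal (beta_src_proof (tagged b)))
  end.
Definition Qdtgt (e : QdA) : QdV :=
  match e with
  | inl a => existT _ (t (val a)) (lastord (proj2 (elimT andP (valP a))))
  | inr b => existT _ (tag b) (Ordinal (beta_tgt_proof (tagged b)))
  end.
End LegQuiver.

(* Theta_{i,k} = a_{i,k} - a_{i,k+1} for k < d_i, Theta_{i,d_i} = a_{i,d_i}
   (here with 0-based index k-1 = tagged x). *)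
Definition anat (C : numClosedFieldType) (V : finType) (d : V -> nat)
  (a : forall i, 'I_(d i) -> C) (i : V) (m : nat) : C :=
  if insub m is Some k then a i k else 0.
Definition Theta (C : numClosedFieldType) (V : finType) (d : V -> nat)
  (a : forall i, 'I_(d i) -> C) (x : QdV d) : C :=
  let i := tag x in let k := nat_of_ord (tagged x) in
  if (k.+1 < d i)%N then anat a i k - anat a i k.+1 else anat a i k.

From HB Require Import structures.
From mathcomp Require Import all_boot all_order all_algebra.
From mathcomp Require Import perm ring.
Import Order.TTheory GRing.Theory Num.Theory.
Local Open Scope ring_scope.
Set Implicit Arguments. Unset Strict Implicit. Unset Printing Implicit Defensive.

(* Along the leg of a vertex i the moment map equations read
   beta_(k-1) beta_(k-1)^* - beta_k^* beta_k = Theta_k.  Since M N and N M have the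
   same spectrum up to one extra eigenvalue 0 (Sylvester), induction along the leg
   shows that beta beta^* arriving at the top vertex has eigenvalues a_d - a_j, so
   the top equation says that mu_Q of the remaining arrows is Hermitian with the
   spectrum a_1, ..., a_d of B_i; two such matrices are unitarily conjugate, and
   mu_Q is equivariant for the unitary groups.  Conversely, writing
   B_i = U^* diag(a) U, the leg arrows diag(sqrt(a_(k+1) - a_j))_(j <= k) padded by a
   zero row, composed with U^* at the top, solve the equations; the square roots
   exist because the a's are sorted. *)

Lemma char_poly_mulmxC_Xn (R : comNzRingType) p q (M : 'M[R]_(p, q))
    (N : 'M[R]_(q, p)) :
  'X ^+ q * char_poly (M *m N) = 'X ^+ p * char_poly (N *m M).
Proof.
set Mp := map_mx polyC M; set Np := map_mx polyC N.
pose W := block_mx ('X%:M : 'M_p) Mp Np (1%:M : 'M_q).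
have detW_MN : \det W = char_poly (M *m N).
  have := det_mulmx (block_mx 1%:M (- Mp) 0 1%:M) W.
  rewrite det_ublock !det1 mul1r mulmx_block !mul1mx !mul0mx !add0r mulNmx.
  rewrite mulmx1 subrr det_lblock det1 mulr1 mul1r => <-.
  by rewrite /char_poly /char_poly_mx map_mxM.
have detW_NM : 'X ^+ q * \det W = 'X ^+ p * char_poly (N *m M).
  have := det_mulmx (block_mx 1%:M 0 (- Np) ('X%:M : 'M_q)) W.
  rewrite det_lblock det1 mul1r det_scalar mulmx_block !mul1mx !mul0mx !addr0.
  rewrite mulmx1 mul_mx_scalar mul_scalar_mx scalerN addNr.
  rewrite det_ublock det_scalar addrC => <-.
  by rewrite /char_poly /char_poly_mx map_mxM mulNmx.
by rewrite -detW_NM detW_MN.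
Qed.

Lemma char_poly_mulmxC_succ (R : idomainType) q (M : 'M[R]_(q.+1, q))
    (N : 'M[R]_(q, q.+1)) :
  char_poly (M *m N) = 'X * char_poly (N *m M).
Proof.
have Xq_neq0 : ('X^q : {poly R}) != 0 by rewrite expf_neq0 // polyX_eq0.
apply: (mulfI Xq_neq0); rewrite mulrA -exprSr.
exact: char_poly_mulmxC_Xn.
Qed.

Lemma char_poly_similar (R : comUnitRingType) n (P A : 'M[R]_n) :
  P \in unitmx -> char_poly (invmx P *m A *m P) = char_poly A.
Proof.
move=> Pu; rewrite /char_poly /char_poly_mx.
have -> : 'X%:M - map_mx polyC (invmx P *m A *m P) =
    map_mx polyC (invmx P) *m ('X%:M - map_mx polyC A) *m map_mx polyC P.
  rewrite mulmxBr mulmxBl !map_mxM; congr (_ - _).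
  by rewrite mul_mx_scalar -scalemxAl -map_mxM mulVmx // map_mx1 scalemx1.
rewrite !det_mulmx !det_map_mx mulrC mulrA -rmorphM -det_mulmx mulmxV //.
by rewrite det1 mul1r.
Qed.

Lemma char_poly_diag_mx (R : comNzRingType) n (x : 'rV[R]_n) :
  char_poly (diag_mx x) = \prod_(k < n) ('X - (x 0 k)%:P).
Proof.
rewrite char_poly_trig ?diag_mx_is_trig //.
by apply: eq_bigr => k _; rewrite mxE eqxx mulr1n.
Qed.

Lemma char_poly_affine (F : fieldType) n (A : 'M[F]_n) (b : 'I_n -> F) (c u : F) :
  u != 0 -> char_poly A = \prod_(k < n) ('X - (b k)%:P) ->
  char_poly (c%:M + u *: A) = \prod_(k < n) ('X - (c + u * b k)%:P).
Proof.
move=> u_neq0 charA; pose q : {poly F} := u^-1 *: ('X - c%:P).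
have uq : u%:P * q = 'X - c%:P.
  by rewrite /q -mul_polyC mulrA -polyCM mulfV // mul1r.
rewrite /char_poly; have -> : char_poly_mx (c%:M + u *: A) =
    u%:P *: map_mx (comp_poly q) (char_poly_mx A).
  apply/matrixP => i j; rewrite !mxE comp_polyB comp_polyC.
  case: (i == j); rewrite ?mulr1n ?mulr0n ?comp_polyX ?comp_poly0 mulrBr ?uq;
    rewrite ?polyCD ?polyCM ?polyC0; ring.
rewrite detZ det_map_mx -/(char_poly A) charA rmorph_prod.
rewrite -[in u%:P ^+ n](card_ord n) -prodr_const -big_split.
apply: eq_bigr => k _ /=; rewrite comp_polyB comp_polyX comp_polyC mulrBr uq.
by rewrite polyCD polyCM; ring.
Qed.

Section Adjoint.
Variable C : numClosedFieldType.

Lemma adjmxK m n (M : 'M[C]_(m, n)) : adjmx (adjmx M) = M.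
Proof. exact: trmxCK. Qed.

Lemma adjmxM m n p (M : 'M[C]_(m, n)) (N : 'M[C]_(n, p)) :
  adjmx (M *m N) = adjmx N *m adjmx M.
Proof. by rewrite /adjmx trmx_mul map_mxM. Qed.

Lemma adjmx1 n : adjmx (1%:M : 'M[C]_n) = 1%:M.
Proof. by rewrite /adjmx trmx1 map_mx1. Qed.

Lemma adjmxB m n (M N : 'M[C]_(m, n)) : adjmx (M - N) = adjmx M - adjmx N.
Proof. by apply/matrixP => i j; rewrite !mxE rmorphB. Qed.

Lemma adjmx_sum m n (I : finType) (P : pred I) (F : I -> 'M[C]_(m, n)) :
  adjmx (\sum_(j | P j) F j) = \sum_(j | P j) adjmx (F j).
Proof.
apply/matrixP => i j; rewrite !mxE !summxE rmorph_sum.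
by apply: eq_bigr => k _; rewrite !mxE.
Qed.

Lemma adjmx_conform m n (M : 'M[C]_m) :
  adjmx (conform_mx (0 : 'M[C]_n) M) = conform_mx 0 (adjmx M).
Proof.
have [<-|neq_mn] := eqVneq m n; first by rewrite !conform_mx_id.
by rewrite !nonconform_mx ?neq_mn //; apply/matrixP => i j; rewrite !mxE conjC0.
Qed.

Lemma adjmx_perm_mx n (p : {perm 'I_n}) : adjmx (perm_mx p : 'M[C]_n) = perm_mx p^-1.
Proof. by rewrite /adjmx tr_perm_mx map_perm_mx. Qed.

Lemma adjmx_hermsym n (A : 'M[C]_n) : adjmx A = A -> A \is hermsymmx.
Proof.
by move=> herm_A; rewrite is_hermitianmxE expr0 scale1r; apply/eqP; rewrite -[LHS]herm_A.
Qed.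

Lemma mulmx_adj_unitary n (U : 'M[C]_n) : U \is unitarymx -> U *m adjmx U = 1%:M.
Proof. by move/unitarymxP. Qed.

Lemma adj_mulmx_unitary n (U : 'M[C]_n) : U \is unitarymx -> adjmx U *m U = 1%:M.
Proof. by move=> Uu; rewrite -(mul1mx (adjmx U *m U)) mulmxA mulmxKtV. Qed.

Lemma adjmx_unitary n (U : 'M[C]_n) : (adjmx U \is unitarymx) = (U \is unitarymx).
Proof. exact: trmxC_unitary. Qed.

Lemma perm_mx_unitary n (p : {perm 'I_n}) : perm_mx p \is @unitarymx C n n.
Proof.
by apply/unitarymxP; rewrite tr_perm_mx map_perm_mx -perm_mxM mulgV perm_mx1.
Qed.

Lemma conform_unitary m n (U : 'M[C]_m) : U \is unitarymx ->
  conform_mx (1%:M : 'M[C]_n) U \is unitarymx.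
Proof.
move=> Uu; have [eq_mn|neq_mn] := eqVneq m n; first by subst; rewrite conform_mx_id.
by rewrite nonconform_mx ?neq_mn //; apply/unitarymxP; rewrite mul1mx trmx1 map_mx1.
Qed.

End Adjoint.

Section Spectral.
Variable C : numClosedFieldType.

Lemma hermitian_char_poly_split n (A : 'M[C]_n) : adjmx A = A ->
  exists a : 'I_n -> C, char_poly A = \prod_(k < n) ('X - (a k)%:P).
Proof.
move=> /adjmx_hermsym /hermitian_normalmx /orthomx_spectralP EA.
exists (fun k => spectral_diag A 0 k).
by rewrite {1}EA char_poly_similar ?spectral_unit // char_poly_diag_mx.
Qed.

Lemma hermitian_spectral_sorted n (A : 'M[C]_n) (a : 'I_n -> C) :
  adjmx A = A -> char_poly A = \prod_(k < n) ('X - (a k)%:P) ->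
  exists2 U : 'M[C]_n, U \is unitarymx & A = adjmx U *m diag_mx (\row_k a k) *m U.
Proof.
move=> herm_A charA.
have /hermitian_normalmx /orthomx_spectralP EA := adjmx_hermsym herm_A.
set P := spectralmx A in EA; set sp := spectral_diag A in EA.
have charA_sp : char_poly A = \prod_(k < n) ('X - (sp 0 k)%:P).
  by rewrite {1}EA char_poly_similar ?spectral_unit // char_poly_diag_mx.
have /tuple_permP[p /val_inj a_sp] :
    perm_eq [tuple a k | k < n] [tuple sp 0 k | k < n].
  apply: prod_XsubC_eq; rewrite !big_map -!enumT !big_enum /=.
  by rewrite -charA -charA_sp.
have a_p k : a k = sp 0 (p k).
  by have := congr1 (fun s => tnth s k) a_sp; rewrite !tnth_mktuple.
exists (perm_mx p *m P); first by rewrite mul_unitarymx ?perm_mx_unitary ?spectral_unitarymx.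
have -> : diag_mx (\row_k a k) = perm_mx p *m diag_mx sp *m perm_mx p^-1.
  rewrite -row_permE -col_permE; apply/matrixP => i j.
  by rewrite !mxE a_p (inj_eq perm_inj); case: eqP => [->|].
rewrite adjmxM adjmx_perm_mx !mulmxA -(mulmxA _ (perm_mx p^-1)) -perm_mxM mulVg.
rewrite perm_mx1 mulmx1 -(mulmxA _ (perm_mx p^-1)) -perm_mxM mulVg perm_mx1.
by rewrite mulmx1 {1}EA invmx_unitary ?spectral_unitarymx.
Qed.

Lemma hermitian_unitary_similar n (A B : 'M[C]_n) :
  adjmx A = A -> adjmx B = B -> char_poly A = char_poly B ->
  exists2 W : 'M[C]_n, W \is unitarymx & B = adjmx W *m A *m W.
Proof.
move=> herm_A herm_B charAB; have [a charA] := hermitian_char_poly_split herm_A.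
have [U Uu EA] := hermitian_spectral_sorted herm_A charA.
have [V Vu EB] := hermitian_spectral_sorted herm_B (etrans (esym charAB) charA).
exists (adjmx U *m V); first by rewrite mul_unitarymx ?adjmx_unitary.
rewrite adjmxM adjmxK EA !mulmxA -(mulmxA _ U) mulmx_adj_unitary // mulmx1.
by rewrite -(mulmxA _ U (adjmx U)) mulmx_adj_unitary // mulmx1 EB.
Qed.

End Spectral.

Section MomentMap.
Variables (C : numClosedFieldType) (I E : finType) (s t : E -> I) (dim : I -> nat).
Implicit Type f : forall e : E, 'M[C]_(dim (t e), dim (s e)).

Lemma mu_hermitian f v : adjmx (mu f v) = mu f v.
Proof.
rewrite /mu adjmxB !adjmx_sum.
by congr (_ - _); apply: eq_bigr => e _; rewrite adjmx_conform adjmxM adjmxK.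
Qed.

Lemma mu_unitary_conj f (W : forall i, 'M[C]_(dim i)) :
  (forall i, W i \is unitarymx) -> forall v,
  mu (fun e => adjmx (W (t e)) *m f e *m W (s e)) v = adjmx (W v) *m mu f v *m W v.
Proof.
move=> Wu v; rewrite /mu mulmxBr mulmxBl !mulmx_sumr !mulmx_suml.
congr (_ - _); apply: eq_bigr => e /eqP <-; rewrite !conform_mx_id !adjmxM adjmxK.
  by rewrite !mulmxA -(mulmxA _ (W (s e))) mulmx_adj_unitary // mulmx1.
by rewrite !mulmxA -(mulmxA _ (W (t e))) mulmx_adj_unitary // mulmx1.
Qed.

Lemma mu_image_unitary_similar f (B : forall i, 'M[C]_(dim i)) :
  (forall i, exists2 W : 'M[C]_(dim i), W \is unitarymx & B i = adjmx W *m mu f i *m W) ->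
  exists f', forall i, mu f' i = B i.
Proof.
move=> /fin_all_exists2[W Wu EB].
by exists (fun e => adjmx (W (t e)) *m f e *m W (s e)) => i; rewrite mu_unitary_conj.
Qed.

End MomentMap.

Section Conform.
Variable C : numClosedFieldType.

Lemma conform_mxK m n p q (A : 'M[C]_(m, n)) (B : 'M[C]_(p, q)) (B' : 'M[C]_(m, n)) :
  m = p -> n = q -> conform_mx B' (conform_mx B A) = A.
Proof. by move=> eq_mp eq_nq; subst; rewrite !conform_mx_id. Qed.

Lemma conform_mx_conform m n p q r u (A : 'M[C]_(m, n)) (B1 : 'M[C]_(p, q))
    (B2 : 'M[C]_(r, u)) :
  m = p -> n = q -> conform_mx B2 (conform_mx B1 A) = conform_mx B2 A.
Proof. by move=> eq_mp eq_nq; subst; rewrite !conform_mx_id. Qed.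

Lemma conform_mx0 m n p q : conform_mx (0 : 'M[C]_(p, q)) (0 : 'M[C]_(m, n)) = 0.
Proof.
have [eq_mp|neq_mp] := eqVneq m p; last by rewrite nonconform_mx // neq_mp.
have [eq_nq|neq_nq] := eqVneq n q; last by rewrite nonconform_mx // neq_nq orbT.
by subst; rewrite conform_mx_id.
Qed.

Lemma conform_mx_sum m n (J : finType) (P : pred J) (F : J -> 'M[C]_m) : m = n ->
  conform_mx (0 : 'M[C]_n) (\sum_(j | P j) F j) =
  \sum_(j | P j) conform_mx (0 : 'M[C]_n) (F j).
Proof.
by move=> eq_mn; subst; rewrite conform_mx_id; apply: eq_bigr => j _; rewrite conform_mx_id.
Qed.

Lemma conform_mxB m n (M N : 'M[C]_m) : m = n ->
  conform_mx (0 : 'M[C]_n) (M - N) = conform_mx 0 M - conform_mx 0 N.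
Proof. by move=> eq_mn; subst; rewrite !conform_mx_id. Qed.

Lemma conform_mx_mul_adj m n m' n' p (G : 'M[C]_(m, n)) : m = m' -> n = n' ->
  conform_mx (0 : 'M[C]_p) (conform_mx (0 : 'M[C]_(m', n')) G
      *m adjmx (conform_mx (0 : 'M[C]_(m', n')) G))
  = conform_mx (0 : 'M[C]_p) (G *m adjmx G).
Proof. by move=> eq_m eq_n; subst; rewrite !conform_mx_id. Qed.

Lemma conform_mx_adj_mul m n m' n' p (G : 'M[C]_(m, n)) : m = m' -> n = n' ->
  conform_mx (0 : 'M[C]_p) (adjmx (conform_mx (0 : 'M[C]_(m', n')) G)
      *m conform_mx (0 : 'M[C]_(m', n')) G)
  = conform_mx (0 : 'M[C]_p) (adjmx G *m G).
Proof. by move=> eq_m eq_n; subst; rewrite !conform_mx_id. Qed.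

Lemma char_poly_conform m n (M : 'M[C]_m) : m = n ->
  char_poly (conform_mx (0 : 'M[C]_n) M) = char_poly M.
Proof. by move=> eq_mn; subst; rewrite conform_mx_id. Qed.

Lemma empty_mx0 m n (M : 'M[C]_(m, n)) : ~~ ((0 < n)%N && (0 < m)%N) -> M = 0.
Proof.
case: m M => [|m] M; first by rewrite flatmx0.
by case: n M => [|n] M //; rewrite thinmx0.
Qed.

End Conform.

Lemma big_sig_cond (M : nmodType) (T : finType) (P Q : pred T) (F : T -> M) :
  \sum_(x | Q x && P x) F x = \sum_(y : {x | P x} | Q (val y)) F (val y).
Proof.
rewrite (reindex_omap (val : {x | P x} -> T) insub); last first.
  by move=> x /andP[_ Px]; rewrite insubT.
by apply: eq_bigl => -[x Px] /=; rewrite insubT Px andbT /= eqxx andbT.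
Qed.

Section LegDecomposition.
Variables (C : numClosedFieldType) (V A : finType) (s t : A -> V) (d : V -> nat).

Lemma QdV_eqE (j i : V) (u : 'I_(d j)) (v : 'I_(d i)) :
  (existT (fun i => 'I_(d i)) j u == existT _ i v :> QdV d) =
  (j == i) && (u == v :> nat).
Proof.
have [eq_ji|neq_ji] /= := eqVneq j i; first by subst j; rewrite eq_Tagged.
by apply/negP => /eq_tag /= eq_ji; rewrite eq_ji eqxx in neq_ji.
Qed.

Variable g : forall e : QdA s t d, 'M[C]_(hatd (Qdtgt e), hatd (Qdsrc e)).

Definition leg i (m : 'I_((d i).-1)) : 'M[C]_(m.+2, m.+1) :=
  g (inr (existT (fun i => 'I_((d i).-1)) i m)).

Definition leg_in i k : 'M[C]_(k.+1) :=
  \sum_(m : 'I_((d i).-1) | m.+1 == k) conform_mx 0 (leg m *m adjmx (leg m)).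
Definition leg_out i k : 'M[C]_(k.+1) :=
  \sum_(m : 'I_((d i).-1) | m == k :> nat) conform_mx 0 (adjmx (leg m) *m leg m).
Definition arrow_in i k : 'M[C]_(k.+1) :=
  \sum_(a : {a : A | (0 < d (s a))%N && (0 < d (t a))%N} |
        (t (val a) == i) && ((d (t (val a))).-1 == k))
     conform_mx 0 (g (inl a) *m adjmx (g (inl a))).
Definition arrow_out i k : 'M[C]_(k.+1) :=
  \sum_(a : {a : A | (0 < d (s a))%N && (0 < d (t a))%N} |
        (s (val a) == i) && ((d (s (val a))).-1 == k))
     conform_mx 0 (adjmx (g (inl a)) *m g (inl a)).

Lemma mu_leg_quiver i (k : 'I_(d i)) :
  mu g (existT _ i k) = (leg_in i k + arrow_in i k) - (leg_out i k + arrow_out i k).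
Proof.
rewrite /mu !big_sumType [leg_in _ _ + _]addrC [leg_out _ _ + _]addrC.
congr (_ + _ - (_ + _)).
- by apply: eq_bigl => a /=; rewrite QdV_eqE.
- rewrite (eq_big (fun b : {j : V & 'I_((d j).-1)} =>
      (tag b == i) && ((tagged b).+1 == k))
      (fun b => conform_mx (0 : 'M_(k.+1)) (leg (tagged b) *m adjmx (leg (tagged b)))));
    [|by case=> j m /=; rewrite QdV_eqE|by case].
  rewrite -(sig_big_dep (fun j => j == i) (fun j (m : 'I_((d j).-1)) => m.+1 == k)
     (fun j (m : 'I_((d j).-1)) => conform_mx (0 : 'M_(k.+1)) (leg m *m adjmx (leg m)))).
  by rewrite big_pred1_eq.
- by apply: eq_bigl => a /=; rewrite QdV_eqE.
rewrite (eq_big (fun b : {j : V & 'I_((d j).-1)} =>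
    (tag b == i) && (tagged b == k :> nat))
    (fun b => conform_mx (0 : 'M_(k.+1)) (adjmx (leg (tagged b)) *m leg (tagged b))));
  [|by case=> j m /=; rewrite QdV_eqE|by case].
rewrite -(sig_big_dep (fun j => j == i) (fun j (m : 'I_((d j).-1)) => m == k :> nat)
   (fun j (m : 'I_((d j).-1)) => conform_mx (0 : 'M_(k.+1)) (adjmx (leg m) *m leg m))).
by rewrite big_pred1_eq.
Qed.

Lemma leg_in0 i : leg_in i 0 = 0.
Proof. by rewrite /leg_in big_pred0. Qed.

Lemma leg_inS i k (lt_k : (k < (d i).-1)%N) :
  leg_in i k.+1 = leg (Ordinal lt_k) *m adjmx (leg (Ordinal lt_k)).
Proof. by rewrite /leg_in (big_pred1 (Ordinal lt_k)) ?conform_mx_id. Qed.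

Lemma leg_outE i k (lt_k : (k < (d i).-1)%N) :
  leg_out i k = adjmx (leg (Ordinal lt_k)) *m leg (Ordinal lt_k).
Proof. by rewrite /leg_out (big_pred1 (Ordinal lt_k)) ?conform_mx_id. Qed.

Lemma leg_out_top i k : ~~ (k < (d i).-1)%N -> leg_out i k = 0.
Proof.
move=> ge_k; rewrite /leg_out big_pred0 // => m; apply/negP => /eqP eq_mk.
by move: (ltn_ord m); rewrite eq_mk (negbTE ge_k).
Qed.

Lemma arrow_in_lt i k : (k.+1 < d i)%N -> arrow_in i k = 0.
Proof.
move=> lt_k; rewrite /arrow_in big_pred0 // => a; apply/negP => /andP[/eqP ta /eqP eq_k].
by move: lt_k; rewrite -eq_k ta; case: (d i) => [|n] //=; rewrite ltnn.
Qed.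

Lemma arrow_out_lt i k : (k.+1 < d i)%N -> arrow_out i k = 0.
Proof.
move=> lt_k; rewrite /arrow_out big_pred0 // => a; apply/negP => /andP[/eqP sa /eqP eq_k].
by move: lt_k; rewrite -eq_k sa; case: (d i) => [|n] //=; rewrite ltnn.
Qed.

(* Arrows of [Q] with an endpoint of dimension [0] are absent from [Q_d], but they
   only carry empty matrices. *)
Lemma arrow_in_out_top (f : forall a : A, 'M[C]_(d (t a), d (s a))) :
  (forall a' : {a : A | (0 < d (s a))%N && (0 < d (t a))%N},
     f (val a') = conform_mx 0 (g (inl a'))) ->
  forall i k, k.+1 = d i ->
  arrow_in i k - arrow_out i k = conform_mx (0 : 'M_(k.+1)) (mu f i).
Proof.
move=> fE i k eq_k; rewrite /mu conform_mxB ?conform_mx_sum //; congr (_ - _).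
  rewrite (bigID (fun a => (0 < d (s a))%N && (0 < d (t a))%N)) /=.
  rewrite [X in _ + X]big1 ?addr0; last first.
    by move=> a /andP[_ Na]; rewrite (empty_mx0 (f a)) ?mul0mx ?conform_mx0.
  rewrite big_sig_cond /arrow_in; apply: eq_big => a'.
    by have [->|] //= := eqVneq (t (val a')) i; rewrite -eq_k /= eqxx.
  move=> /andP[/eqP ta _]; rewrite conform_mx_conform ?ta // fE.
  by case/andP: (valP a') => /prednK ? /prednK ?; rewrite conform_mx_mul_adj.
rewrite (bigID (fun a => (0 < d (s a))%N && (0 < d (t a))%N)) /=.
rewrite [X in _ + X]big1 ?addr0; last first.
  by move=> a /andP[_ Na]; rewrite (empty_mx0 (f a)) ?mulmx0 ?conform_mx0.
rewrite big_sig_cond /arrow_out; apply: eq_big => a'.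
  by have [->|] //= := eqVneq (s (val a')) i; rewrite -eq_k /= eqxx.
move=> /andP[/eqP sa _]; rewrite conform_mx_conform ?sa // fE.
by case/andP: (valP a') => /prednK ? /prednK ?; rewrite conform_mx_adj_mul.
Qed.

End LegDecomposition.

Section DiagonalMatrices.
Variable C : numClosedFieldType.

Definition stair_mx m (v : nat -> C) : 'M[C]_(m.+2, m.+1) :=
  \matrix_(r, c) (if r == c :> nat then v c else 0).

Lemma stair_mx_adj_mul m v :
  adjmx (stair_mx m v) *m stair_mx m v = diag_mx (\row_(c < m.+1) ((v c)^* * v c)).
Proof.
apply/matrixP => c c'; rewrite !mxE (bigD1 (widen_ord (ltnW (ltnSn _)) c)) //=.
rewrite big1 ?addr0 => [|r /negbTE neq_rc]; last first.
  rewrite !mxE; case: eqP => [eq_rc|]; last by rewrite conjC0 mul0r.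
  by move: neq_rc; rewrite -val_eqE /= eq_rc eqxx.
rewrite !mxE /= eqxx; have [<-|neq_cc'] := eqVneq c c'; first by rewrite eqxx mulr1n.
rewrite mulr0n; case: eqP => [/val_inj eq_cc'|]; last by rewrite mulr0.
by rewrite eq_cc' eqxx in neq_cc'.
Qed.

Lemma stair_mx_mul_adj m v :
  stair_mx m v *m adjmx (stair_mx m v) =
  diag_mx (\row_(r < m.+2) (if (r < m.+1)%N then v r * (v r)^* else 0)).
Proof.
apply/matrixP => r r'; rewrite !mxE.
have [lt_r|ge_r] := ltnP r m.+1.
  rewrite (bigD1 (Ordinal lt_r)) //= big1 ?addr0 => [|c /negbTE neq_rc]; last first.
    rewrite !mxE; case: eqP => [eq_rc|]; last by rewrite mul0r.
    by move: neq_rc; rewrite -val_eqE /= -eq_rc eqxx.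
  rewrite !mxE /= eqxx; have [<-|neq_rr'] := eqVneq r r'; first by rewrite eqxx mulr1n.
  rewrite mulr0n; case: eqP => [eq_rr'|]; last by rewrite conjC0 mulr0.
  by move: neq_rr'; rewrite -val_eqE /= eq_rr' eqxx.
rewrite big1; first by case: (r == r').
move=> c _; rewrite !mxE; case: eqP => [eq_rc|]; last by rewrite mul0r.
by move: (ltn_ord c); rewrite -eq_rc ltnNge ge_r.
Qed.

Lemma sqrtC_conj_mul (x : C) : 0 <= x -> (sqrtC x)^* * sqrtC x = x.
Proof. by move=> x_ge0; rewrite geC0_conj ?sqrtC_ge0 // -expr2 sqrtCK. Qed.

Lemma diag_mx_sub_shift n (x y : C) (b : nat -> C) :
  diag_mx (\row_(r < n) (x - b r)) - diag_mx (\row_(r < n) (y - b r)) = (x - y)%:M.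
Proof.
apply/matrixP => r c; rewrite !mxE; case: (r == c); rewrite ?mulr1n ?mulr0n ?subrr //.
by ring.
Qed.

End DiagonalMatrices.

Section ThetaLevels.
Variables (C : numClosedFieldType) (V : finType) (d : V -> nat).
Variable a : forall i : V, 'I_(d i) -> C.
Arguments a : clear implicits.

Lemma anatE i (j : 'I_(d i)) : anat a i j = a i j.
Proof. by rewrite /anat valK. Qed.

Lemma prod_XsubC_anat i n : n = d i ->
  \prod_(j < d i) ('X - (a i j)%:P) = \prod_(j < n) ('X - (anat a i j)%:P).
Proof. by move=> ->; apply: eq_bigr => j _; rewrite anatE. Qed.

Lemma Theta_lt i (k : 'I_(d i)) : (k.+1 < d i)%N ->
  Theta a (existT _ i k) = anat a i k - anat a i k.+1.
Proof. by rewrite /Theta /= => ->. Qed.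

Lemma Theta_top i (k : 'I_(d i)) : k.+1 = d i -> Theta a (existT _ i k) = anat a i k.
Proof. by rewrite /Theta /= => ->; rewrite ltnn. Qed.

End ThetaLevels.

Section FromLegQuiver.
Variables (C : numClosedFieldType) (V A : finType) (s t : A -> V) (d : V -> nat).
Variable a : forall i : V, 'I_(d i) -> C.
Arguments a : clear implicits.
Variable g : forall e : QdA s t d, 'M[C]_(hatd (Qdtgt e), hatd (Qdsrc e)).
Hypothesis mu_g : forall x, mu g x = (Theta a x)%:M.

Lemma leg_out_shift i k : (k.+1 < d i)%N ->
  leg_out g i k = (anat a i k.+1 - anat a i k)%:M + leg_in g i k.
Proof.
move=> lt_k; have := mu_g (existT _ i (Ordinal (ltnW lt_k))).
rewrite mu_leg_quiver arrow_in_lt ?arrow_out_lt // !addr0 Theta_lt //= => mu_ik.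
rewrite -[leg_out g i k](subKr (leg_in g i k)) mu_ik -raddfN /= opprB.
by rewrite addrC.
Qed.

(* Sylvester's identity: each step along the leg adds the eigenvalue [0]. *)
Lemma char_poly_leg_in i k : (k < d i)%N ->
  char_poly (leg_in g i k) = \prod_(j < k.+1) ('X - (anat a i k - anat a i j)%:P).
Proof.
elim: k => [|k IHk] lt_k.
  rewrite leg_in0 char_poly_trig ?mx0_is_trig //.
  by apply: eq_bigr => j _; rewrite mxE (ord1 j) /= subrr.
have lt_k' : (k < (d i).-1)%N by rewrite -ltnS prednK // (leq_ltn_trans _ lt_k).
rewrite (leg_inS g lt_k') char_poly_mulmxC_succ -(leg_outE g lt_k').
rewrite leg_out_shift // -[leg_in g i k]scale1r.
rewrite (char_poly_affine _ _ (IHk (ltnW lt_k))) ?oner_neq0 //.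
rewrite [RHS]big_ord_recr /= subrr polyC0 subr0 mulrC; congr (_ * _).
by apply: eq_bigr => j _ /=; congr ('X - _%:P); ring.
Qed.

Definition restrict_arrows (e : A) : 'M[C]_(d (t e), d (s e)) :=
  if insub e is Some e' then conform_mx 0 (g (inl e')) else 0.

Lemma char_poly_mu_restrict i :
  char_poly (mu restrict_arrows i) = \prod_(j < d i) ('X - (a i j)%:P).
Proof.
have [d0|d_gt0] := posnP (d i).
  rewrite (prod_XsubC_anat a (esym d0)) big_ord0.
  by move: (mu restrict_arrows i); rewrite d0 => M; rewrite /char_poly det_mx00.
have top_eq : ((d i).-1).+1 = d i by rewrite prednK.
have lt_top : ((d i).-1 < d i)%N by rewrite -{2}top_eq.
have := mu_g (existT _ i (Ordinal lt_top)).
rewrite mu_leg_quiver leg_out_top ?ltnn // add0r Theta_top //= -addrA => mu_top.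
have : arrow_in g i (d i).-1 - arrow_out g i (d i).-1 =
    (anat a i (d i).-1)%:M + (-1) *: leg_in g i (d i).-1.
  by rewrite -mu_top scaleN1r addrAC subrr add0r.
rewrite (arrow_in_out_top (f := restrict_arrows) _ top_eq); last first.
  by move=> e'; rewrite /restrict_arrows valK.
rewrite -(char_poly_conform _ (esym top_eq)) => ->.
rewrite (char_poly_affine _ _ (char_poly_leg_in lt_top)) ?oppr_eq0 ?oner_eq0 //.
rewrite (prod_XsubC_anat a top_eq); apply: eq_bigr => j _; congr ('X - _%:P); ring.
Qed.

End FromLegQuiver.

Section ToLegQuiver.
Variables (C : numClosedFieldType) (V A : finType) (s t : A -> V) (d : V -> nat).
Variable a : forall i : V, 'I_(d i) -> C.
Arguments a : clear implicits.
Hypothesis a_sorted : forall i (k l : 'I_(d i)), (k <= l)%N -> a i k <= a i l.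
Variable U : forall i : V, 'M[C]_(d i).
Hypothesis U_unitary : forall i, U i \is unitarymx.
Variable f : forall e : A, 'M[C]_(d (t e), d (s e)).
Hypothesis mu_f : forall i, mu f i = adjmx (U i) *m diag_mx (\row_k a i k) *m U i.

Lemma anat_sorted i j m : (j <= m)%N -> (m < d i)%N -> anat a i j <= anat a i m.
Proof.
move=> le_jm lt_m; have lt_j := leq_ltn_trans le_jm lt_m.
by rewrite (anatE a (Ordinal lt_j)) (anatE a (Ordinal lt_m)) a_sorted.
Qed.

(* [U i]^* at the top vertex ([n = d i]); [conform_mx] makes it the identity at
   every vertex below. *)
Definition leg_frame i n : 'M[C]_n := conform_mx 1%:M (adjmx (U i)).

Definition leg_stair i m : 'M[C]_(m.+2, m.+1) :=
  stair_mx m (fun j => sqrtC (anat a i m.+1 - anat a i j)).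

Definition extend_arrows (e : QdA s t d) : 'M[C]_(hatd (Qdtgt e), hatd (Qdsrc e)) :=
  match e as e0 return 'M[C]_(hatd (Qdtgt e0), hatd (Qdsrc e0)) with
  | inl e' => conform_mx 0 (f (val e'))
  | inr b => leg_frame (tag b) (tagged b).+2 *m leg_stair (tag b) (tagged b)
  end.

Lemma leg_frame_unitary i n : leg_frame i n \is unitarymx.
Proof. by apply: conform_unitary; rewrite adjmx_unitary. Qed.

Lemma leg_stair_adj_mul i m : (m.+1 < d i)%N ->
  adjmx (leg_stair i m) *m leg_stair i m =
  diag_mx (\row_(c < m.+1) (anat a i m.+1 - anat a i c)).
Proof.
move=> lt_m; rewrite stair_mx_adj_mul; congr diag_mx; apply/rowP => c; rewrite !mxE.
by rewrite sqrtC_conj_mul // subr_ge0 anat_sorted // ltnW.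
Qed.

Lemma leg_stair_mul_adj i m : (m.+1 < d i)%N ->
  leg_stair i m *m adjmx (leg_stair i m) =
  diag_mx (\row_(r < m.+2) (anat a i m.+1 - anat a i r)).
Proof.
move=> lt_m; rewrite stair_mx_mul_adj; congr diag_mx; apply/rowP => r; rewrite !mxE.
have [lt_r|ge_r] := ltnP r m.+1.
  by rewrite mulrC sqrtC_conj_mul // subr_ge0 anat_sorted // ltnW.
have -> : nat_of_ord r = m.+1 by apply/eqP; rewrite eqn_leq ge_r -ltnS ltn_ord.
by rewrite subrr.
Qed.

Lemma leg_in_extend i k : (k < d i)%N ->
  leg_in extend_arrows i k =
  leg_frame i k.+1 *m diag_mx (\row_(r < k.+1) (anat a i k - anat a i r))
    *m adjmx (leg_frame i k.+1).
Proof.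
case: k => [|m] lt_k.
  rewrite leg_in0; have -> : diag_mx (\row_(r < 1) (anat a i 0 - anat a i r)) = 0.
    by apply/matrixP => r c; rewrite !mxE (ord1 r) subrr mul0rn.
  by rewrite mulmx0 mul0mx.
have lt_m : (m < (d i).-1)%N by rewrite -ltnS prednK // (leq_ltn_trans _ lt_k).
rewrite (leg_inS _ lt_m) /leg /= adjmxM !mulmxA -(mulmxA _ (leg_stair i m)).
by rewrite leg_stair_mul_adj.
Qed.

Lemma leg_out_extend i k : (k.+1 < d i)%N ->
  leg_out extend_arrows i k = diag_mx (\row_(c < k.+1) (anat a i k.+1 - anat a i c)).
Proof.
move=> lt_k; have lt_k' : (k < (d i).-1)%N.
  by rewrite -ltnS prednK // (leq_ltn_trans _ lt_k).
rewrite (leg_outE _ lt_k') /leg /= adjmxM !mulmxA -(mulmxA _ (adjmx (leg_frame i k.+2))).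
by rewrite adj_mulmx_unitary ?leg_frame_unitary // mulmx1 leg_stair_adj_mul.
Qed.

Lemma leg_in_top_complement i p (c : C) : d i = p ->
  leg_frame i p *m diag_mx (\row_(r < p) (c - anat a i r)) *m adjmx (leg_frame i p)
  + conform_mx (0 : 'M[C]_p) (mu f i) = c%:M.
Proof.
move=> eq_p; subst p; rewrite /leg_frame !conform_mx_id adjmxK mu_f.
have -> : diag_mx (\row_(r < d i) (c - anat a i r)) = c%:M - diag_mx (\row_r a i r).
  apply/matrixP => r r'; rewrite !mxE anatE.
  by case: (r == r'); rewrite ?mulr1n ?mulr0n ?subrr.
rewrite mulmxBr mulmxBl mul_mx_scalar -scalemxAl adj_mulmx_unitary // scalemx1.
by rewrite subrK.
Qed.

Lemma mu_extend x : mu extend_arrows x = (Theta a x)%:M.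
Proof.
case: x => i k; rewrite mu_leg_quiver.
have [lt_k|ge_k] := ltnP k.+1 (d i).
  rewrite arrow_in_lt ?arrow_out_lt // !addr0 (leg_in_extend (ltnW lt_k)).
  rewrite leg_out_extend // /leg_frame nonconform_mx; last by rewrite neq_ltn lt_k orbT.
  by rewrite adjmx1 mulmx1 mul1mx diag_mx_sub_shift Theta_lt.
have top_k : k.+1 = d i by apply/eqP; rewrite eqn_leq ge_k ltn_ord.
rewrite leg_out_top; last by rewrite ltn_predRL -leqNgt.
rewrite add0r -addrA (arrow_in_out_top (f := f)) //; last first.
  move=> e'; case/andP: (valP e') => /prednK ? /prednK ?.
  by rewrite conform_mxK.
by rewrite (leg_in_extend (ltn_ord k)) Theta_top // leg_in_top_complement.
Qed.

End ToLegQuiver.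

Theorem proposition4p2 (C : numClosedFieldType) (V A : finType) (s t : A -> V)
  (d : V -> nat) (B : forall i : V, 'M[C]_(d i)) (a : forall i : V, 'I_(d i) -> C) :
  (forall i, adjmx (B i) = B i) ->
  (forall i, char_poly (B i) = \prod_(k < d i) ('X - (a i k)%:P)) ->
  (forall i (k l : 'I_(d i)), (k <= l)%N -> a i k <= a i l) ->
  ((exists f : forall e : A, 'M[C]_(d (t e), d (s e)), forall i, mu f i = B i)
   <->
   (exists g : forall e : QdA s t d, 'M[C]_(hatd (Qdtgt e), hatd (Qdsrc e)),
      forall x : QdV d, mu g x = (Theta a x)%:M)).
Proof.
move=> herm_B charB a_sorted; split=> [[f mu_f]|[g mu_g]].
  have [U Uu EB] := fin_all_exists2 (fun i => hermitian_spectral_sorted (herm_B i) (charB i)).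
  exists (extend_arrows a U f).
  by apply: mu_extend => // i; rewrite mu_f EB.
apply: (mu_image_unitary_similar (f := restrict_arrows g)) => i.
apply: hermitian_unitary_similar (mu_hermitian _ i) (herm_B i) _.
by rewrite charB (char_poly_mu_restrict mu_g).
Qed.
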